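(* For every $V>0$ and every $x=(x_1,x_2,x_3)\in\Omega_V$, at least one coordinate satisfies $|x_i|<1$.
   Context: $f(x,y,z)=(2xy-z,x,y)$ on $\mathbb{R}^3$; $I(x,y,z)=x^2+y^2+z^2-2xyz-1$; $S_V=\{I=V\}$; for $V>0$, $\Omega_V=\{p\in S_V:\{f^n(p)\}_{n\in\mathbb{Z}}\text{ is bounded}\}$. *)

From Stdlib Require Import Reals ZArith.
Open Scope R_scope.

Definition pt : Type := (R * R * R)%type.

Definition f (p : pt) : pt :=
  let '(x, y, z) := p in (2 * x * y - z, x, y).

Definition finv (p : pt) : pt :=
  let '(x, y, z) := p in (y, z, 2 * y * z - x).

Definition fiter (n : Z) (p : pt) : pt :=
  match n with
  | Z0 => p
  | Zpos k => Nat.iter (Pos.to_nat k) f p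
  | Zneg k => Nat.iter (Pos.to_nat k) finv p
  end.

Definition I (p : pt) : R :=
  let '(x, y, z) := p in x ^ 2 + y ^ 2 + z ^ 2 - 2 * x * y * z - 1.

Definition coord1 (p : pt) : R := fst (fst p).
Definition coord2 (p : pt) : R := snd (fst p).
Definition coord3 (p : pt) : R := snd p.

Definition bounded_orbit (p : pt) : Prop :=
  exists M : R, forall n : Z,
    Rabs (coord1 (fiter n p)) <= M /\
    Rabs (coord2 (fiter n p)) <= M /\
    Rabs (coord3 (fiter n p)) <= M.

Definition Omega (V : R) (p : pt) : Prop := I p = V /\ bounded_orbit p.

From Pilot Require Import Defs.
From Stdlib Require Import Reals ZArith Lra Psatz.
Open Scope R_scope.

(* Stdlib's Reals also export names f and finv; refer to those of Defs. *)
Local Notation f := Defs.f.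
Local Notation finv := Defs.finv.

(* Suppose |x|, |y|, |z| >= 1.  We exhibit a point q, obtained from p = (x,y,z)
   by at most one application of f or of the reversal (x,y,z) -> (z,y,x), lying
   in the "escape region"
       xyz > 0,   1 <= |z| <= |x|,   1 <= |y|,
   and with I q = I p > 0.  The escape region is forward invariant under f, and
   on it the first coordinate satisfies |x'| = 2|x||y| - |z|; hence the gap
   |x| - |z| never decreases and |x| grows at least by this gap at each step.
   After one step the gap is strictly positive because I > 0, so |x| grows
   linearly along the forward orbit of q.  Finally, boundedness of the full
   Z-orbit of p yields boundedness of the forward first coordinates of q
   (the reversal conjugates f to its inverse), a contradiction. *)

Lemma Rabs_sub_same_sign (u v : R) :
  0 < u * v -> Rabs v < Rabs u ->
  0 < (u - v) * u /\ Rabs (u - v) = Rabs u - Rabs v.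
Proof. intros. unfold Rabs in *; repeat destruct Rcase_abs; split; nra. Qed.

Lemma Rabs_sub_opp_sign (u v : R) :
  u * v < 0 -> 0 < (u - v) * u /\ Rabs (u - v) = Rabs u + Rabs v.
Proof. intros. unfold Rabs in *; repeat destruct Rcase_abs; split; nra. Qed.

Definition escape_region (p : pt) : Prop :=
  let '(x, y, z) := p in
  0 < x * y * z /\ 1 <= Rabs z <= Rabs x /\ 1 <= Rabs y.

Definition gap (p : pt) : R := Rabs (coord1 p) - Rabs (coord3 p).

Lemma I_f (p : pt) : I (f p) = I p.
Proof. destruct p as [[x y] z]; simpl; ring. Qed.

(* The reversal of coordinates, conjugating f to its inverse. *)
Definition rev (p : pt) : pt := let '(x, y, z) := p in (z, y, x).

Lemma I_rev (p : pt) : I (rev p) = I p.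
Proof. destruct p as [[x y] z]; simpl; ring. Qed.

Lemma Rabs_f1_escape (x y z : R) :
  escape_region (x, y, z) ->
  0 < (2 * x * y - z) * (2 * x * y) /\
  Rabs (2 * x * y - z) = 2 * Rabs x * Rabs y - Rabs z.
Proof.
  intros (Hpos & [Hz Hzx] & Hy).
  assert (Hu : Rabs (2 * x * y) = 2 * Rabs x * Rabs y).
  { rewrite !Rabs_mult, (Rabs_pos_eq 2); lra. }
  rewrite <- Hu. apply Rabs_sub_same_sign; [nra | rewrite Hu; nra].
Qed.

Lemma escape_step (p : pt) :
  escape_region p ->
  escape_region (f p) /\
  Rabs (coord1 (f p)) >= Rabs (coord1 p) + gap p /\
  gap (f p) >= gap p.
Proof.
  destruct p as [[x y] z]. intros Hp.
  destruct (Rabs_f1_escape x y z Hp) as [Hsign Hx'].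
  destruct Hp as (_ & [Hz Hzx] & Hy).
  unfold gap, coord1, coord3; simpl. rewrite Hx'.
  repeat split; nra.
Qed.

Lemma escape_iter (p : pt) (n : nat) :
  escape_region p ->
  escape_region (Nat.iter n f p) /\
  Rabs (coord1 (Nat.iter n f p)) >= Rabs (coord1 p) + INR n * gap p /\
  gap (Nat.iter n f p) >= gap p.
Proof.
  intros Hp. induction n as [|n (Hn & Hgrow & Hgap)]; simpl Nat.iter.
  - split; [exact Hp | simpl; lra].
  - destruct (escape_step _ Hn) as (Hn' & Hgrow' & Hgap').
    rewrite S_INR. repeat split; [exact Hn' | lra | lra].
Qed.

Lemma gap_f_pos (p : pt) : escape_region p -> 0 < I p -> 0 < gap (f p).
Proof.
  destruct p as [[x y] z]. intros Hp HI.
  destruct (Rabs_f1_escape x y z Hp) as [_ Hx'].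
  destruct Hp as (Hpos & [Hz Hzx] & Hy).
  assert (Habs : x * y * z = Rabs x * Rabs y * Rabs z).
  { rewrite <- !Rabs_mult, Rabs_pos_eq; lra. }
  unfold I in HI.
  replace (2 * x * y * z) with (2 * (x * y * z)) in HI by ring.
  rewrite Habs, <- (pow2_abs x), <- (pow2_abs y), <- (pow2_abs z) in HI.
  unfold gap, coord1, coord3; simpl. rewrite Hx'. nra.
Qed.

Definition forward_bounded (p : pt) : Prop :=
  exists M : R, forall n : nat, Rabs (coord1 (Nat.iter n f p)) <= M.

Lemma escape_unbounded (p : pt) :
  escape_region p -> 0 < I p -> ~ forward_bounded p.
Proof.
  intros Hp HI [M HM].
  pose proof (gap_f_pos p Hp HI) as Hgap.
  destruct (escape_step p Hp) as [Hfp _].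
  destruct (INR_archimed (gap (f p)) M Hgap) as [n Hn].
  destruct (escape_iter (f p) n Hfp) as (_ & Hgrow & _).
  specialize (HM (S n)). rewrite Nat.iter_succ_r in HM.
  pose proof (Rabs_pos (coord1 (f p))). lra.
Qed.

Lemma forward_bounded_f (p : pt) : forward_bounded p -> forward_bounded (f p).
Proof.
  intros [M HM]. exists M. intros n. rewrite <- Nat.iter_succ_r. apply HM.
Qed.

Lemma iter_finv (n : nat) (p : pt) :
  Nat.iter n finv p = rev (Nat.iter n f (rev p)).
Proof.
  induction n as [|n IH]; simpl.
  - destruct p as [[x y] z]; reflexivity.
  - rewrite IH. destruct (Nat.iter n f (rev p)) as [[x y] z]; simpl.
    f_equal. ring.
Qed.

Lemma fiter_of_nat (n : nat) (p : pt) : fiter (Z.of_nat n) p = Nat.iter n f p.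
Proof. destruct n; [reflexivity|]. simpl. now rewrite SuccNat2Pos.id_succ. Qed.

Lemma fiter_opp_of_nat (n : nat) (p : pt) :
  fiter (- Z.of_nat n) p = rev (Nat.iter n f (rev p)).
Proof.
  destruct n; simpl.
  - destruct p as [[x y] z]; reflexivity.
  - rewrite SuccNat2Pos.id_succ. apply (iter_finv (S n)).
Qed.

Lemma bounded_orbit_forward (p : pt) : bounded_orbit p -> forward_bounded p.
Proof.
  intros [M HM]. exists M. intros n.
  rewrite <- fiter_of_nat. apply HM.
Qed.

Lemma bounded_orbit_backward (p : pt) : bounded_orbit p -> forward_bounded (rev p).
Proof.
  intros [M HM]. exists M. intros n.
  destruct (HM (- Z.of_nat n)%Z) as (_ & _ & Hb).
  rewrite fiter_opp_of_nat in Hb.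
  destruct (Nat.iter n f (rev p)) as [[x y] z]. exact Hb.
Qed.

Lemma escape_region_cases (x y z : R) :
  1 <= Rabs x -> 1 <= Rabs y -> 1 <= Rabs z ->
  escape_region (x, y, z) \/ escape_region (rev (x, y, z)) \/
  escape_region (f (x, y, z)).
Proof.
  intros Hx Hy Hz.
  assert (Hnz : x * y * z <> 0).
  { intros E. assert (Habs : Rabs (x * y * z) = 0) by (rewrite E; apply Rabs_R0).
    rewrite !Rabs_mult in Habs.
    assert (1 <= Rabs x * Rabs y) by nra. nra. }
  destruct (Rtotal_order (x * y * z) 0) as [Hneg | [E | Hpos]]; [| contradiction |].
  - right; right. simpl.
    assert (Hu : Rabs (2 * x * y) = 2 * Rabs x * Rabs y).
    { rewrite !Rabs_mult, (Rabs_pos_eq 2); lra. }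
    destruct (Rabs_sub_opp_sign (2 * x * y) z ltac:(nra)) as [Hsign Hx'].
    rewrite Hx', Hu. repeat split; nra.
  - destruct (Rle_lt_dec (Rabs z) (Rabs x)).
    + left. repeat split; lra.
    + right; left. simpl. repeat split; nra.
Qed.

Theorem lemma5p18 :
  forall (V x1 x2 x3 : R), 0 < V -> Omega V (x1, x2, x3) ->
    Rabs x1 < 1 \/ Rabs x2 < 1 \/ Rabs x3 < 1.
Proof.
  intros V x y z HV [HI Hb].
  destruct (Rlt_le_dec (Rabs x) 1) as [|Hx]; [now left|].
  destruct (Rlt_le_dec (Rabs y) 1) as [|Hy]; [now right; left|].
  destruct (Rlt_le_dec (Rabs z) 1) as [|Hz]; [now right; right|].
  exfalso.
  destruct (escape_region_cases x y z Hx Hy Hz) as [Hp | [Hp | Hp]].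
  - apply (escape_unbounded _ Hp); [lra | now apply bounded_orbit_forward].
  - apply (escape_unbounded _ Hp); [rewrite I_rev; lra | now apply bounded_orbit_backward].
  - apply (escape_unbounded _ Hp); [rewrite I_f; lra |].
    now apply forward_bounded_f, bounded_orbit_forward.
Qed.
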